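(* Let $\Bbbk$ be a field, $m\in\mathbb N$, $K=\Bbbk[\sigma]/(\sigma^m)$ and $L=\Bbbk[\varepsilon]/(\varepsilon^{2m})$, with $K$ viewed as a subalgebra of $L$ via $\sigma=\varepsilon^2$. For $0\le j\le m$ let $K_j=K/(\sigma^j)$. Let $V$ be a $K$-module and $\tilde\theta:V\to L$ an injective $K$-linear map whose adjoint $L$-linear map $\theta:L\otimes_K V\to L$ is surjective. Then there exists $0\le j\le m$ such that $V\cong K\oplus K_j$. *)

From HB Require Import structures.
From mathcomp Require Import all_boot all_algebra.
Set Implicit Arguments. Unset Strict Implicit. Unset Printing Implicit Defensive.
Import GRing.Theory.
Local Open Scope ring_scope.

(* K sits in L via sigma |-> eps^2, so L as a K-module has sigma acting by
     multiplication by 'X^2 (reduced mod 'X^(2m)).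
   - K_j = K/(sigma^j) = k[sigma]/(sigma^j): polynomials of size <= j with
     sigma acting by p |-> trunc j ('X * p). *)

Definition trunc (F : fieldType) (n : nat) (p : {poly F}) : {poly F} :=
  p %% 'X^n.

(* The L-linear adjoint theta : L (x)_K V -> L, l (x) v |-> l * theta~(v),
   is surjective: every element of L is the image of a finite sum of pure
   tensors, i.e. is of the form sum_i l_i * theta~(v_i) computed in L. *)
Definition adjoint_surjective (F : fieldType) (V : lmodType F) (m : nat)
    (theta : V -> {poly F}) : Prop :=
  forall x : {poly F}, (size x <= 2 * m)%N ->
    exists r : seq ({poly F} * V),
      x = trunc (2 * m) (\sum_(c <- r) c.1 * theta c.2).

Definition iso_K_plus_Kj (F : fieldType) (V : lmodType F) (s : V -> V)
    (m j : nat) : Prop :=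
  exists f1 f2 : {linear V -> {poly F}},
    [/\ forall v, (size (f1 v) <= m)%N /\ (size (f2 v) <= j)%N,
        forall v, f1 (s v) = trunc m ('X * f1 v) /\
                  f2 (s v) = trunc j ('X * f2 v),
        forall v, f1 v = 0 -> f2 v = 0 -> v = 0 &
        forall p q : {poly F}, (size p <= m)%N -> (size q <= j)%N ->
          exists v, f1 v = p /\ f2 v = q].

From HB Require Import structures.
From mathcomp Require Import all_boot all_algebra.
From Stdlib Require Import Classical.
Set Implicit Arguments.
Unset Strict Implicit.
Unset Printing Implicit Defensive.
Import GRing.Theory.
Local Open Scope ring_scope.

(* Since L (x)_K V -> L is onto and L is local, some theta~(v0) is a unit of L;
   dividing theta~ by it we may assume theta~(v0) = 1.  Writing elements of L
   as a(eps^2) + eps b(eps^2) identifies L with K (+) K as a K-module, so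
   theta~ becomes an injective K-linear map v |-> (e v, o v) into K^2 with
   (e v0, o v0) = (1, 0).  If sigma^r is the largest power of sigma dividing
   every o v, then clearing the even part of a v with o v of order exactly r
   and multiplying by the inverse of its unit part gives v1 |-> (0, sigma^r);
   v |-> (e v, o v / sigma^r) is then an isomorphism V ~ K (+) K_(m-r). *)

Section TruncatedPolynomials.
Variable R : comNzRingType.
Implicit Types (p q : {poly R}) (n : nat).

Lemma take_poly_mulmr n p q :
  take_poly n (p * take_poly n q) = take_poly n (p * q).
Proof.
by rewrite !Pdiv.RingMonic.take_poly_rmodp Pdiv.RingMonic.rmodp_mulmr ?monicXn.
Qed.

Lemma take_poly_mulml n p q :
  take_poly n (take_poly n p * q) = take_poly n (p * q).
Proof. by rewrite mulrC take_poly_mulmr mulrC. Qed.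

Lemma even_take_poly n p :
  even_poly (take_poly n.*2 p) = take_poly n (even_poly p).
Proof.
by apply/polyP => i; rewrite !(coef_even_poly, coef_take_poly) ltn_double.
Qed.

Lemma odd_take_poly n p :
  odd_poly (take_poly n.*2 p) = take_poly n (odd_poly p).
Proof.
by apply/polyP => i; rewrite !(coef_odd_poly, coef_take_poly) ltn_Sdouble.
Qed.

Lemma even_polyX2M p : even_poly ('X^2 * p) = 'X * even_poly p.
Proof. by rewrite mulrC expr2 mulrA even_polyMX odd_polyMX mulrC. Qed.

Lemma odd_polyX2M p : odd_poly ('X^2 * p) = 'X * odd_poly p.
Proof. by rewrite mulrC expr2 mulrA odd_polyMX even_polyMX mulrC. Qed.

Lemma size_even_poly_le n p : (size p <= n.*2)%N -> (size (even_poly p) <= n)%N.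
Proof.
by move=> le_pn; rewrite (leq_trans (size_even_poly p)) ?leq_uphalf_double.
Qed.

Lemma size_odd_poly_le n p : (size p <= n.*2)%N -> (size (odd_poly p) <= n)%N.
Proof.
move=> le_pn; rewrite (leq_trans (size_odd_poly p)) //.
by rewrite -[n]half_double half_leq.
Qed.

End TruncatedPolynomials.

Lemma truncE (F : fieldType) n (p : {poly F}) : trunc n p = take_poly n p.
Proof. by rewrite Pdiv.IdomainMonic.take_poly_modp. Qed.

Lemma take_poly_inv (F : fieldType) n (d : {poly F}) :
  d`_0 != 0 -> exists h, take_poly n (h * d) = take_poly n 1.
Proof.
move=> d0_neq0; have coprime_dX : coprimep d 'X.
  rewrite -[X in coprimep _ X]subr0 -polyC0 coprimep_XsubC.
  by rewrite rootE horner_coef0.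
have /Bezout_eq1_coprimepP [[u1 u2] /= Bezout] := coprimep_expr n coprime_dX.
by exists u1; rewrite -Bezout take_polyD take_polyMXn_0 addr0.
Qed.

Lemma least_index (P : nat -> Prop) n :
  exists2 r, forall k, (k < r)%N -> ~ P k & (r < n)%N -> P r.
Proof.
elim: n => [|n [r notP Pr]]; first by exists 0%N.
have [lt_rn | le_nr] := ltnP r n; first by exists r => // _; apply: Pr.
have notP_n k : (k < n)%N -> ~ P k.
  by move=> lt_kn; apply: notP; apply: leq_trans le_nr.
have [Pn | notPn] := classic (P n); first by exists n.
exists n.+1 => [k|]; last by rewrite ltnn.
by rewrite ltnS leq_eqVlt => /predU1P [-> | /notP_n].
Qed.

Section PolynomialAction.
Variables (R : comNzRingType) (V : lmodType R) (s : {linear V -> V}).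

Definition poly_act (p : {poly R}) (v : V) : V :=
  \sum_(i < size p) p`_i *: iter i s v.

Lemma equivariant_poly_act n (f : {linear V -> {poly R}}) :
    (forall v, (size (f v) <= n)%N) ->
    (forall v, f (s v) = take_poly n ('X * f v)) ->
  forall p v, f (poly_act p v) = take_poly n (p * f v).
Proof.
move=> size_f f_s.
have f_iter i v : f (iter i s v) = take_poly n ('X^i * f v).
  elim: i => [|i IH]; first by rewrite expr0 mul1r take_poly_id.
  by rewrite iterS f_s IH take_poly_mulmr mulrA -exprS.
move=> p v; rewrite -[p in RHS]coefK poly_def mulr_suml take_poly_sum.
rewrite linear_sum.
by apply: eq_bigr => i _; rewrite linearZ f_iter -scalerAl take_polyZ.
Qed.

End PolynomialAction.

Section Classification.
Variables (F : fieldType) (m : nat) (V : lmodType F) (s : {linear V -> V}).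
Variables (e o : {linear V -> {poly F}}) (v0 : V).
Hypothesis size_e : forall v, (size (e v) <= m)%N.
Hypothesis size_o : forall v, (size (o v) <= m)%N.
Hypothesis e_s : forall v, e (s v) = take_poly m ('X * e v).
Hypothesis o_s : forall v, o (s v) = take_poly m ('X * o v).
(* [take_poly m 1] rather than [1], so that m = 0 needs no special case. *)
Hypothesis e_v0 : e v0 = take_poly m 1.
Hypothesis o_v0 : o v0 = 0.
Hypothesis eo_inj : forall v, e v = 0 -> o v = 0 -> v = 0.

Let e_act := equivariant_poly_act size_e e_s.
Let o_act := equivariant_poly_act size_o o_s.

Section Generator.
Variable r : nat.
Hypothesis o_divisible : forall v, o v = drop_poly r (o v) * 'X^r.
Hypothesis o_order_r : (r < m)%N -> exists v, (o v)`_r != 0.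

Lemma exists_odd_generator : exists v1, e v1 = 0 /\ o v1 = take_poly m 'X^r.
Proof.
have [lt_rm | le_mr] := ltnP r m; last first.
  exists 0; rewrite !linear0 -['X^r]mul1r take_polyMXn.
  by rewrite (eqP (_ : m - r == 0)%N) ?subn_eq0 // take_poly0l mul0r.
have [v o_v_r] := o_order_r lt_rm.
have [h hE] : exists h, take_poly m (h * drop_poly r (o v)) = take_poly m 1.
  by apply: take_poly_inv; rewrite coef_drop_poly.
exists (poly_act s h (v - poly_act s (e v) v0)).
rewrite e_act o_act !linearB e_act o_act e_v0 o_v0 take_poly_mulmr mulr1.
rewrite (take_poly_id (size_e v)) subrr !mulr0 !take_poly0r subr0; split=> //.
by rewrite o_divisible mulrA -take_poly_mulml hE take_poly_mulml mul1r.
Qed.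

Lemma iso_K_plus_K_subn : iso_K_plus_Kj s m (m - r).
Proof.
have [v1 [e_v1 o_v1]] := exists_odd_generator.
exists e, (drop_poly r \o o); split=> [v|v|v /= e0 o0|p q le_pm le_qmr] /=.
- by rewrite size_drop_poly leq_sub2r.
- rewrite !truncE e_s o_s; split=> //.
  by rewrite {1}o_divisible mulrA take_polyMXn drop_polyMXn_id.
- by apply: eo_inj => //; rewrite o_divisible o0 mul0r.
exists (poly_act s p v0 + poly_act s q v1).
rewrite !linearD !e_act !o_act e_v0 o_v0 e_v1 o_v1 !mulr0 !take_poly0r linear0.
rewrite addr0 add0r !take_poly_mulmr mulr1 take_polyMXn /= drop_polyMXn_id.
by rewrite !take_poly_id.
Qed.

End Generator.

Lemma classification : exists2 j, (j <= m)%N & iso_K_plus_Kj s m j.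
Proof.
have [r below_r at_r] := least_index (fun k => exists v, (o v)`_k != 0) m.
have o_divisible v : o v = drop_poly r (o v) * 'X^r.
  rewrite -{1}(poly_take_drop r (o v)) [take_poly r _](_ : _ = 0) ?add0r //.
  apply/polyP => k; rewrite coef_take_poly coef0; case: ifP => // lt_kr.
  by apply/eqP/negPn/negP; apply: (not_ex_all_not _ _ (below_r k lt_kr)).
by exists (m - r)%N; [apply: leq_subr | apply: iso_K_plus_K_subn].
Qed.

End Classification.

Section Normalization.
Variables (F : fieldType) (m : nat) (V : lmodType F) (s : {linear V -> V}).
Variable theta : {linear V -> {poly F}}.
Hypothesis size_theta : forall v, (size (theta v) <= m.*2)%N.
Hypothesis theta_s : forall v, theta (s v) = take_poly m.*2 ('X^2 * theta v).
Hypothesis theta_inj : injective theta.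
Hypothesis theta_gen : adjoint_surjective m theta.

Lemma adjoint_surjective_unit :
  exists g v0, take_poly m.*2 (g * theta v0) = take_poly m.*2 1.
Proof.
have [[v0 unit_v0] | no_unit] := classic (exists v, (theta v)`_0 != 0).
  by have [g ?] := take_poly_inv m.*2 unit_v0; exists g, v0.
exists 0, 0; rewrite mul0r take_poly0r.
have [-> | m_gt0] := posnP m; first by rewrite take_poly0l.
have size_1 : (size (take_poly m.*2 1 : {poly F}) <= 2 * m)%N.
  by rewrite mul2n size_take_poly.
have [cs one_gen] := theta_gen size_1.
have theta_coef0 v : (theta v)`_0 = 0.
  by apply/eqP/negPn/negP; apply: (not_ex_all_not _ _ no_unit).
have coef0_sum : (\sum_(c <- cs) c.1 * theta c.2)`_0 = 0.
  by rewrite coef_sum big1 // => c _; rewrite coef0M theta_coef0 mulr0.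
have := congr1 (fun p : {poly F} => p`_0) one_gen.
rewrite truncE !coef_take_poly double_gt0 m_gt0 coef1 coef0_sum if_same.
by move/eqP; rewrite oner_eq0.
Qed.

Lemma exists_normalized_embedding :
  exists (w : {linear V -> {poly F}}) (v0 : V),
    [/\ forall v, (size (w v) <= m.*2)%N,
        forall v, w (s v) = take_poly m.*2 ('X^2 * w v),
        w v0 = take_poly m.*2 1 &
        forall v, w v = 0 -> v = 0].
Proof.
have [g [v0 unit_v0]] := adjoint_surjective_unit.
exists (take_poly m.*2 \o (g \*o theta)), v0; split=> [v|v||v /= w0] /=.
- exact: size_take_poly.
- by rewrite theta_s !take_poly_mulmr mulrCA.
- exact: unit_v0.
apply: theta_inj; rewrite linear0 -[theta v](take_poly_id (size_theta v)).
rewrite -[theta v]mul1r -take_poly_mulml -unit_v0 take_poly_mulml mulrAC mulrC.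
by rewrite -take_poly_mulmr w0 mulr0 take_poly0r.
Qed.

End Normalization.

Theorem lemma3p3 (F : fieldType) (m : nat) (V : lmodType F)
    (s : {linear V -> V}) (theta : {linear V -> {poly F}}) :
  (forall v, iter m s v = 0) ->
  (forall v, (size (theta v) <= 2 * m)%N) ->
  (forall v, theta (s v) = trunc (2 * m) ('X^2 * theta v)) ->
  injective theta ->
  adjoint_surjective m theta ->
  exists2 j, (j <= m)%N & iso_K_plus_Kj s m j.
Proof.
move=> _ size_theta theta_s theta_inj theta_gen.
have size_theta2 v : (size (theta v) <= m.*2)%N by rewrite -mul2n.
have theta_s2 v : theta (s v) = take_poly m.*2 ('X^2 * theta v).
  by rewrite theta_s truncE mul2n.
have [w [v0 [size_w w_s w_v0 w_inj]]] :=
  exists_normalized_embedding size_theta2 theta_s2 theta_inj theta_gen.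
apply: (@classification F m V s (@even_poly F \o w) (@odd_poly F \o w) v0)
  => [v|v|v|v|||v /= e0 o0] /=.
- exact: size_even_poly_le.
- exact: size_odd_poly_le.
- by rewrite w_s even_take_poly even_polyX2M.
- by rewrite w_s odd_take_poly odd_polyX2M.
- by rewrite w_v0 even_take_poly -polyC1 even_polyC.
- by rewrite w_v0 odd_take_poly -polyC1 odd_polyC take_poly0r.
by apply: w_inj; rewrite -[w v]poly_even_odd e0 o0 !comp_poly0 mul0r addr0.
Qed.
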